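(* Let $A$ be a binary $n\times m$ matrix that has no two identical rows, and suppose $A$ has a binary base $\{u_1,\dots,u_d\}$ that is disjoint in rows. Then $\{u_1,\dots,u_d\}$ spans (in the binary sense) every other binary base of $A$.
   Context: A set $X$ of $\{0,1\}$-vectors spans a vector $y$ (binary sense) if $y=\sum_{x\in X}c_xx$ with $c_x\in\{0,1\}$ and ordinary addition; it spans a set $Y$ if it spans each vector of $Y$. A binary base of $A$ is a set of $\{0,1\}$ column vectors of length $n$ spanning every column of $A$, of minimum cardinality among such spanning sets. A base is disjoint in rows if no two distinct vectors of it have a $1$ in the same coordinate. *)

(* Binary vectors of length n are column vectors 'cV[bool]_n;
   a bit b is read as the natural number (nat_of_bool b) in {0,1}. *)
From mathcomp Require Import all_boot all_order all_algebra.
Set Implicit Arguments. Unset Strict Implicit. Unset Printing Implicit Defensive.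

Section Binary.
Variable n : nat.
Local Notation bvec := 'cV[bool]_n.

(* X spans y in the binary sense: y = sum_{x in X} c_x x with c_x in {0,1},
   ordinary (nat) addition; choosing c is choosing the subset S of X with c_x=1. *)
Definition bspans_vec (X : {set bvec}) (y : bvec) : Prop :=
  exists S : {set bvec}, S \subset X /\
    forall i : 'I_n, (y i ord0 : nat) = (\sum_(x in S) (x i ord0 : nat))%N.

Definition bspans (X Y : {set bvec}) : Prop :=
  forall y, y \in Y -> bspans_vec X y.

Definition spans_columns (m : nat) (A : 'M[bool]_(n, m)) (X : {set bvec}) : Prop :=
  forall j : 'I_m, bspans_vec X (col j A).

Definition binary_base (m : nat) (A : 'M[bool]_(n, m)) (B : {set bvec}) : Prop :=
  spans_columns A B /\ forall X : {set bvec}, spans_columns A X -> #|B| <= #|X|.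

Definition disjoint_in_rows (B : {set bvec}) : Prop :=
  forall u v, u \in B -> v \in B -> u != v -> forall i : 'I_n, ~~ (u i ord0 && v i ord0).

Definition no_identical_rows (m : nat) (A : 'M[bool]_(n, m)) : Prop :=
  forall i i' : 'I_n, row i A = row i' A -> i = i'.
End Binary.

(* A vector b of a binary base B of A is used in the decomposition of some
   column, since otherwise B minus b would still span A; as sums are taken in
   nat, b is then dominated by that column.  On the other hand, if U is
   disjoint in rows and spans A, then every column restricted to the support
   of some u in U is constant, so rows sharing a u coincide: with distinct rows
   every u is a unit vector, and rows covered by no u are zero.  Hence U spans
   every vector dominated by a column of A, in particular every vector of B. *)
From mathcomp Require Import all_boot all_order all_algebra.

Set Implicit Arguments.
Unset Strict Implicit.
Unset Printing Implicit Defensive.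

Lemma leq_bit_sum n (S : {set 'cV[bool]_n}) x i :
  x \in S -> (x i ord0 <= \sum_(y in S) (y i ord0 : nat))%N.
Proof. by move=> xS; rewrite (bigD1 x) //= leq_addr. Qed.

Lemma binary_base_dominated n m (A : 'M[bool]_(n, m)) B b :
  binary_base A B -> b \in B -> exists j, forall i, b i ord0 -> A i j.
Proof.
move=> [spB minB] bB.
have [/existsP [j /forallP dom] | undominated] :=
  boolP [exists j, [forall i, b i ord0 ==> A i j]].
  by exists j => i; apply/implyP.
have spBb : spans_columns A (B :\ b).
  move=> j; have [S [sSB HS]] := spB j; exists S; split=> //.
  apply/subsetP => x xS; rewrite in_setD1 (subsetP sSB _ xS) andbT.
  apply: contraNneq undominated => xb; subst x.
  apply/existsP; exists j; apply/forallP => i; apply/implyP => bi.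
  by have := leq_bit_sum i xS; rewrite bi -HS mxE; case: (A i j).
by have := minB _ spBb; rewrite (cardsD1 b B) bB add1n ltnn.
Qed.

Section DisjointSpanningSet.
Variables (n m : nat) (A : 'M[bool]_(n, m)) (U : {set 'cV[bool]_n}).
Hypotheses (dU : disjoint_in_rows U) (spU : spans_columns A U).

Lemma sum_disjoint_in_rows (S : {set 'cV[bool]_n}) u i :
  S \subset U -> u \in U -> u i ord0 ->
  (\sum_(x in S) (x i ord0 : nat))%N = (u \in S).
Proof.
move=> sSU uU ui.
have off x : x \in S -> x != u -> x i ord0 = false.
  move=> xS xu; have := dU (subsetP sSU _ xS) uU xu i.
  by rewrite ui andbT => /negbTE.
have [uS | uNS] := boolP (u \in S).
  by rewrite (bigD1 u) //= ui big1 // => x /andP [xS xu]; rewrite off.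
rewrite big1 // => x xS; rewrite off //.
by apply: contraNneq uNS => <-.
Qed.

Lemma sum_uncovered (S : {set 'cV[bool]_n}) i :
  S \subset U -> (forall u, u \in U -> ~~ u i ord0) ->
  (\sum_(x in S) (x i ord0 : nat))%N = 0%N.
Proof. by move=> sSU unc; rewrite big1 // => x /(subsetP sSU)/unc/negbTE->. Qed.

Lemma row_eq_common_support u i i' : u \in U -> u i ord0 -> u i' ord0 ->
  row i A = row i' A.
Proof.
move=> uU ui ui'; apply/rowP => k; rewrite !mxE.
have [S [sSU HS]] := spU k; move: (HS i) (HS i').
rewrite !mxE (sum_disjoint_in_rows sSU uU ui) (sum_disjoint_in_rows sSU uU ui').
by case: (A i k) (A i' k) (u \in S) => [] [] [].
Qed.

Lemma uncovered_row0 i j : (forall u, u \in U -> ~~ u i ord0) -> A i j = false.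
Proof.
move=> unc; have [S [sSU HS]] := spU j.
by move: (HS i); rewrite mxE sum_uncovered //; case: (A i j).
Qed.

Hypothesis nid : no_identical_rows A.

Lemma support_disjoint_spanning_uniq u i i' :
  u \in U -> u i ord0 -> u i' ord0 -> i = i'.
Proof. by move=> uU ui ui'; apply/nid/(row_eq_common_support uU ui ui'). Qed.

Lemma bspans_vec_dominated (y : 'cV[bool]_n) j :
  (forall i, y i ord0 -> A i j) -> bspans_vec U y.
Proof.
move=> dom; set S := [set u in U | [exists i, u i ord0 && y i ord0]].
have sSU : S \subset U by apply/subsetP => x; rewrite inE => /andP [].
exists S; split=> // i.
have [[u /andP [uU ui]] | unc] := pickP [pred u in U | u i ord0].
  rewrite (sum_disjoint_in_rows sSU uU ui) inE uU /=.
  congr nat_of_bool; apply/idP/existsP => [yi | [i' /andP [ui' yi']]].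
    by exists i; rewrite ui.
  by rewrite (support_disjoint_spanning_uniq uU ui ui').
have uncovered u : u \in U -> ~~ u i ord0.
  by move=> uU; apply/negP => ui; have := unc u; rewrite /= uU ui.
rewrite sum_uncovered //; case yi: (y i ord0) => //.
by have := dom i yi; rewrite uncovered_row0.
Qed.

End DisjointSpanningSet.

Theorem mainTheorem12 (n m : nat) (A : 'M[bool]_(n, m)) (U : {set 'cV[bool]_n}) :
  no_identical_rows A -> binary_base A U -> disjoint_in_rows U ->
  forall B : {set 'cV[bool]_n}, binary_base A B -> bspans U B.
Proof.
move=> nid [spU _] dU B baseB b bB.
have [j dom] := binary_base_dominated baseB bB.
exact: (bspans_vec_dominated dU spU nid dom).
Qed.
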